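(* Let $q$ be a prime power and $n\ge 1$. Suppose $\frac{n(q-1)}{2}\le k\le n(q-1)$, $2k\equiv 0\pmod{q-1}$, and $k\not\equiv 0\pmod{q-1}$. Then $(C_{n,k}^q)^\perp$ is self-orthogonal. Equivalently, for every odd integer $r$ with $n\le r<2n$ (and $q$ odd), the code $(C_{n,r(q-1)/2}^q)^\perp$ is self-orthogonal.
   Context: For a prime power $q$ and integers $n\ge 1$, $k\ge 0$, the projective Reed-Muller code $C_{n,k}^q\subseteq \mathbb{F}_q^N$, $N=\frac{q^{n+1}-1}{q-1}$, is defined as follows. For each point of $\mathbb{P}^n(\mathbb{F}_q)$ choose the affine representative $(p_0,\dots,p_n)\in\mathbb{F}_q^{n+1}\setminus\{0\}$ whose left-most nonzero coordinate equals $1$, and fix an ordering $P_1',\dots,P_N'$ of these representatives. Then $C_{n,k}^q=\{(F(P_1'),\dots,F(P_N')) : F\in \mathbb{F}_q[x_0,\dots,x_n]_k\}$, where $\mathbb{F}_q[x_0,\dots,x_n]_k$ is the space of homogeneous polynomials of degree $k$ together with $0$. Duals are taken with respect to the standard dot product; a code $C$ is self-orthogonal if $C\subseteq C^\perp$. *)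

From HB Require Import structures.
From mathcomp Require Import all_boot all_order all_algebra all_field.
From mathcomp Require Import mpoly.
Set Implicit Arguments. Unset Strict Implicit. Unset Printing Implicit Defensive.
Import GRing.Theory.
Local Open Scope ring_scope.

(* Affine representatives of points of P^n(F_q): nonzero vectors in         *)
(* F^{n+1} whose left-most nonzero coordinate equals 1.                      *)
Definition normalized (F : finFieldType) (n : nat) (v : {ffun 'I_n.+1 -> F}) : bool :=
  [exists i : 'I_n.+1, (v i == 1) && [forall j : 'I_n.+1, (j < i)%N ==> (v j == 0)]].

Definition ppoint (F : finFieldType) (n : nat) : finType :=
  {v : {ffun 'I_n.+1 -> F} | normalized v}.

Definition word (F : finFieldType) (n : nat) := {ffun ppoint F n -> F}.

Definition dotw (F : finFieldType) (n : nat) (u v : word F n) : F :=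
  \sum_(P : ppoint F n) u P * v P.

Definition code (F : finFieldType) (n : nat) := word F n -> Prop.

Definition projRM (F : finFieldType) (n k : nat) : code F n :=
  fun c => exists p : {mpoly F[n.+1]},
    p \is k.-homog /\ forall P : ppoint F n, c P = p.@[fun i => (val P) i].

Definition dual_code (F : finFieldType) (n : nat) (C : code F n) : code F n :=
  fun u => forall c, C c -> dotw u c = 0.

Definition self_orthogonal (F : finFieldType) (n : nat) (C : code F n) : Prop :=
  forall u v, C u -> C v -> dotw u v = 0.

From mathcomp Require Import all_boot all_order all_algebra all_field.
From mathcomp Require Import mpoly fingroup cyclic zify.
Set Implicit Arguments. Unset Strict Implicit. Unset Printing Implicit Defensive.
Import GRing.Theory.

(* Write [q1 = q - 1].  Since [t ^+ q = t], every word is the evaluation of a homogeneous form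
   of degree [K = k (mod q1)], hence a combination [sum_a d_a x^a] of reduced monomials
   (exponents at most [q1]) of total degree [= k (mod q1)]; those of degree at most [k] lie in
   [C_k].  Power sums over [P^n] show that [<x^a, x^(q1 - b)>] vanishes unless [b <= a]
   componentwise, and is nonzero for [a = b].  As [2k = 0] and [k <> 0 (mod q1)], for [|b| > k]
   the complementary monomial [x^(q1 - b)] has degree at most [k] and [= k (mod q1)], so it
   lies in [C_k].  Hence if [w] is orthogonal to [C_k], a [b] of maximal degree above [k] with
   [d_b <> 0] cannot exist: [C_k^perp] is contained in [C_k], so it is self-orthogonal. *)

Lemma gt0_of_modn_neq0 (Q s k : nat) : s = k %[mod Q] -> k %% Q != 0 -> 0 < s.
Proof. by move=> sk; rewrite lt0n; apply: contra_neq => s0; rewrite -sk s0 mod0n. Qed.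

Lemma modn_lt_addn_le (Q a b : nat) : a = b %[mod Q] -> a < b -> a + Q <= b.
Proof.
move=> ab lt_ab; have Q_dvd : Q %| b - a by rewrite -eqn_mod_dvd ?ab // ltnW.
by have := dvdn_leq _ Q_dvd; rewrite subn_gt0 lt_ab; lia.
Qed.

(* Used with [Q = q - 1], [s] the degree of a reduced monomial and [t] that of its complement;
   the hypotheses force [k = (q - 1)/2 (mod q - 1)]. *)
Lemma compl_degree_le (Q n k s t : nat) :
  n * Q <= 2 * k -> (2 * k) %% Q = 0 -> k %% Q != 0 ->
  s = k %[mod Q] -> k < s -> t + s = n.+1 * Q ->
  [/\ 0 < t <= k & t = k %[mod Q]].
Proof.
move=> le_nQ dvd_2k ndvd_k sk lt_ks ts.
have le_s := modn_lt_addn_le (esym sk) lt_ks.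
have tk : t = k %[mod Q].
  have : t + k == k + k %[mod Q].
    by rewrite -modnDmr -sk modnDmr ts modnMl addnn -mul2n dvd_2k.
  by rewrite eqn_modDr => /eqP.
rewrite (gt0_of_modn_neq0 tk ndvd_k) tk; split => //.
by rewrite mulSn in ts; lia.
Qed.

Local Open Scope ring_scope.

Section PowerSums.
Variable F : finFieldType.
Local Notation q1 := #|F|.-1.

Lemma card_pred_gt0 : (0 < q1)%N.
Proof. by case: #|F| (finNzRing_gt1 F) => [|[|m]]. Qed.

Lemma natr_card : (#|F|%:R : F) = 0.
Proof.
have := @expg_cardG F [set: F] 1%R (in_setT _); by rewrite cardsT FinRing.zmodXgE.
Qed.

Lemma natr_pred_card : (q1%:R : F) = -1.
Proof.
apply: (addIr 1); rewrite addNr -mulrSr prednK ?natr_card //.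
exact: ltnW (finNzRing_gt1 F).
Qed.

Lemma expf_pred_card (t : F) : t != 0 -> t ^+ q1 = 1.
Proof.
move=> t0; apply: (mulIf t0); rewrite mul1r -exprSr prednK ?expf_card //.
exact: ltnW (finNzRing_gt1 F).
Qed.

Lemma expf_modn_pred_card (t : F) e : t != 0 -> t ^+ e = t ^+ (e %% q1).
Proof.
by move=> t0; rewrite {1}(divn_eq e q1) exprD mulnC exprM expf_pred_card // expr1n mul1r.
Qed.

(* The polynomial X^r - 1 with 0 < r < q - 1 cannot vanish on all q - 1 units. *)
Lemma exists_expf_neq1 e : ~~ (q1 %| e)%N -> exists2 t : F, t != 0 & t ^+ e != 1.
Proof.
move=> q1_ndvd_e; set r := (e %% q1)%N.
have r_gt0 : (0 < r)%N by rewrite lt0n.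
have r_lt : (r < q1)%N by rewrite ltn_mod card_pred_gt0.
apply/exists_inP; rewrite -negb_forall_in; apply/forall_inP => all_roots.
have roots : all (root ('X^r - 1)) (enum (predC1 (0 : F))).
  apply/allP => t; rewrite mem_enum => /= t0.
  by rewrite rootE !hornerE -expf_modn_pred_card // (eqP (all_roots t t0)) subrr.
have size_Xr : size ('X^r - 1 : {poly F}) = r.+1 by rewrite -polyC1 size_XnsubC.
have := max_poly_roots _ roots (enum_uniq _).
by rewrite size_Xr -cardE cardC1 -size_poly_eq0 size_Xr ltnS leqNgt r_lt => /(_ isT).
Qed.

Lemma sum_expf e : \sum_(t : F) t ^+ e = if (0 < e)%N && (q1 %| e)%N then -1 else 0.
Proof.
case: e => [|e] /=.
  by rewrite (eq_bigr (fun _ => 1)) ?sumr_const ?natr_card // => t _; rewrite expr0.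
have [q1_dvd_e | /exists_expf_neq1 [t0 t0_neq0 t0e_neq1]] := boolP (q1 %| e.+1)%N.
  rewrite (bigD1 0) //= expr0n add0r (eq_bigr (fun _ => 1)).
    by rewrite sumr_const cardC1 natr_pred_card.
  by move=> t t0; rewrite expf_modn_pred_card // (eqP q1_dvd_e) expr0.
set S := \sum_t _.
have S_fixed : S = t0 ^+ e.+1 * S.
  rewrite {1}/S (reindex_inj (mulfI t0_neq0)) mulr_sumr.
  by apply: eq_bigr => t _; rewrite exprMn.
apply/eqP; move/eqP: S_fixed.
by rewrite -subr_eq0 -{1}[S]mul1r -mulrBl mulf_eq0 subr_eq0 eq_sym (negbTE t0e_neq1).
Qed.

End PowerSums.

Section HomogeneousForms.
Variables (R : nzRingType) (N : nat).

Lemma dhomogX1 (i : 'I_N) : ('X_i : {mpoly R[N]}) \is 1.-homog.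
Proof. by rewrite dhomogX /= mdeg1. Qed.

Lemma dhomogXn (i : 'I_N) e : ('X_i ^+ e : {mpoly R[N]}) \is e.-homog.
Proof. by rewrite -{2}[e]mul1n; apply/dhomogMn/dhomogX1. Qed.

Lemma dhomog_prod_ord d m (g : 'I_m -> {mpoly R[N]}) :
  (forall j, g j \is d.-homog) -> \prod_(j < m) g j \is (m * d).-homog.
Proof.
elim: m g => [|m IHm] g g_homog; first by rewrite big_ord0 dhomog1.
by rewrite big_ord_recr mulSnr dhomogM ?IHm.
Qed.

End HomogeneousForms.

Section ProjectiveReedMuller.
Variables (F : finFieldType) (n : nat).
Local Notation q1 := #|F|.-1.
Local Notation V := {ffun 'I_n.+1 -> F}.
Local Notation PP := (ppoint F n).

Definition scalev (l : F) (x : V) : V := [ffun j => l * x j].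

Lemma ppoint_lead (P : PP) :
  exists i, (val P i == 1) && [forall j : 'I_n.+1, (j < i)%N ==> (val P j == 0)].
Proof. exact/existsP/(valP P). Qed.

Lemma scalev_ppoint_inj (l : F) (P Q : PP) : val Q = scalev l (val P) -> Q = P.
Proof.
move=> QlP.
have [i /andP[/eqP Pi /forallP Pj]] := ppoint_lead P.
have [i' /andP[/eqP Qi /forallP Qj]] := ppoint_lead Q.
have Qv j : val Q j = l * val P j by rewrite QlP ffunE.
have [lt_ii'|lt_i'i|/val_inj eq_ii'] := ltngtP i i'.
- have := Qj i; rewrite lt_ii' Qv Pi mulr1 => /eqP l0.
  by move: Qi; rewrite Qv l0 mul0r => /eqP; rewrite eq_sym oner_eq0.
- have := Pj i'; rewrite lt_i'i => /eqP Pi'0.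
  by move: Qi; rewrite Qv Pi'0 mulr0 => /eqP; rewrite eq_sym oner_eq0.
- move: Qi; rewrite -eq_ii' Qv Pi mulr1 => l1.
  by apply/val_inj/ffunP => j; rewrite Qv l1 mul1r.
Qed.

Lemma scalev_ppoint_neq0 (l : F) (P : PP) : l != 0 -> scalev l (val P) != 0.
Proof.
move=> l0; have [i /andP[/eqP Pi _]] := ppoint_lead P.
by apply/eqP => /ffunP/(_ i); rewrite !ffunE Pi mulr1; apply/eqP.
Qed.

Lemma scalev_ppoint_surj (x : V) :
  x != 0 -> exists2 l, l != 0 & exists P : PP, x = scalev l (val P).
Proof.
move=> x0; have [i0 xi0] : exists i, x i != 0.
  by apply/existsP; apply: contraNT x0; rewrite negb_exists => /forallP x0;
     apply/eqP/ffunP => j; rewrite ffunE; apply/eqP/negPn.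
have [i xi min_i] := @arg_minnP _ i0 (fun i => x i != 0) val xi0.
pose v : V := scalev (x i)^-1 x.
have v_normal : normalized v.
  apply/existsP; exists i; rewrite ffunE mulVf // eqxx /=.
  apply/forallP => j; apply/implyP => lt_ji; rewrite ffunE mulf_eq0 invr_eq0 (negbTE xi).
  by apply: contraTT lt_ji => /min_i; rewrite -leqNgt.
exists (x i) => //; exists (exist _ v v_normal).
by apply/ffunP => j; rewrite !ffunE /= mulrA mulfV // mul1r.
Qed.

(* Every nonzero vector is [l P] for a unique [l != 0] and [P], and [q - 1 = -1] in [F]. *)
Lemma sum_scale_invariant (G : V -> F) : (forall l x, l != 0 -> G (scalev l x) = G x) ->
  \sum_(x : V) G x = G 0 - \sum_(P : PP) G (val P).
Proof.
move=> G_inv; rewrite (bigD1 (0 : V)) //=; congr (_ + _).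
pose A := [set p : F * PP | p.1 != 0].
pose f (p : F * PP) := scalev p.1 (val p.2).
have f_inj : {in A &, injective f}.
  move=> [l P] [m Q]; rewrite !inE /= => l0 m0 /ffunP flm.
  have eqQP : Q = P.
    apply: (@scalev_ppoint_inj (l / m)); apply/ffunP => j; rewrite ffunE.
    have := flm j; rewrite /f !ffunE /= => Ej.
    by apply: (mulfI m0); rewrite -Ej mulrA [m * _]mulrCA mulfV // mulr1.
  subst Q; have [i /andP[/eqP Pi _]] := ppoint_lead P.
  by have := flm i; rewrite /f !ffunE /= Pi !mulr1 => ->.
have imf : [set f p | p in A] = [set x : V | x != 0].
  apply/setP => x; rewrite inE; apply/imsetP/idP => [[[l P]] /[!inE] l0 ->|].
    exact: scalev_ppoint_neq0.
  by move=> /scalev_ppoint_surj [l l0 [P ->]]; exists (l, P); rewrite ?inE.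
rewrite (eq_bigl (fun x => x \in [set f p | p in A])); last by move=> x; rewrite imf inE.
rewrite big_imset //= (eq_bigr (fun p => G (val p.2))); last first.
  by move=> [l P]; rewrite inE /= => l0; rewrite G_inv.
rewrite (eq_bigl (fun p : F * PP => (p.1 != 0) && true)); last by move=> p; rewrite inE andbT.
rewrite -(pair_big_dep (fun l : F => l != 0) (fun _ _ => true) (fun _ P => G (val P))) /=.
by rewrite sumr_const cardC1 -mulr_natr natr_pred_card mulrN1.
Qed.

Definition mon (e : 'I_n.+1 -> nat) (x : V) : F := \prod_i x i ^+ e i.

Lemma mon_scalev e l x : mon e (scalev l x) = l ^+ (\sum_i e i) * mon e x.
Proof. by rewrite /mon -prodrXr -big_split; apply: eq_bigr => i _; rewrite ffunE exprMn. Qed.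

Lemma monM e e' x : mon e x * mon e' x = mon (fun i => e i + e' i)%N x.
Proof. by rewrite /mon -big_split; apply: eq_bigr => i _; rewrite exprD. Qed.

Lemma mon0 e : (0 < \sum_i e i)%N -> mon e 0 = 0.
Proof.
rewrite lt0n sum_nat_eq0 negb_forall => /existsP[i /= ei].
by rewrite /mon (bigD1 i) //= ffunE expr0n (negbTE ei) mul0r.
Qed.

Lemma sum_ppoint_mon e : (0 < \sum_i e i)%N -> (q1 %| \sum_i e i)%N ->
  \sum_(P : PP) mon e (val P) = - \prod_i \sum_(t : F) t ^+ e i.
Proof.
move=> e_gt0 q1_dvd_e; rewrite bigA_distr_bigA /= (@sum_scale_invariant (mon e)).
  by rewrite mon0 // sub0r opprK.
by move=> l x l0; rewrite mon_scalev expf_modn_pred_card // (eqP q1_dvd_e) expr0 mul1r.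
Qed.

Local Notation rexp := {ffun 'I_n.+1 -> 'I_q1.+1}.

Definition sdeg (a : rexp) : nat := (\sum_i a i)%N.
Definition monw (a : rexp) : word F n := [ffun P : PP => mon (fun i => a i) (val P)].
Definition compl_rexp (b : rexp) : rexp := [ffun i => rev_ord (b i)].

Lemma sdeg_compl_rexp (b : rexp) : (sdeg (compl_rexp b) + sdeg b = n.+1 * q1)%N.
Proof.
have sum_q1 : (\sum_(i < n.+1) q1 = n.+1 * q1)%N by rewrite sum_nat_const card_ord.
rewrite /sdeg -big_split -sum_q1; apply: eq_bigr => i _ /=.
by rewrite ffunE /= subSS subnK // -ltnS.
Qed.

Lemma dotw_monw_compl (a b : rexp) : (sdeg a = sdeg b %[mod q1])%N -> (0 < sdeg a)%N ->
  dotw (monw a) (monw (compl_rexp b)) = - \prod_i \sum_(t : F) t ^+ (a i + (q1 - b i)).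
Proof.
move=> ab_mod a_gt0.
rewrite /dotw (eq_bigr (fun P : PP => mon (fun i => a i + (q1 - b i))%N (val P))); last first.
  by move=> P _; rewrite !ffunE monM /mon; apply: eq_bigr => i _; rewrite ffunE /= subSS.
have sum_ab : (\sum_i (a i + (q1 - b i)) + sdeg b = sdeg a + n.+1 * q1)%N.
  rewrite big_split /= -addnA -(sdeg_compl_rexp b); congr (_ + (_ + _))%N.
  by apply: eq_bigr => i _; rewrite ffunE /= subSS.
apply: sum_ppoint_mon.
  by apply: leq_trans a_gt0 _; apply: leq_sum => i _; apply: leq_addr.
have : (\sum_i (a i + (q1 - b i)) + sdeg b = 0 + sdeg b %[mod q1])%N.
  by rewrite sum_ab addnC modnMDl add0n ab_mod.
by move/eqP; rewrite eqn_modDr mod0n.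
Qed.

Lemma dotw_monw_compl_eq0 (a b : rexp) i : (a i < b i)%N ->
  (sdeg a = sdeg b %[mod q1])%N -> (0 < sdeg a)%N -> dotw (monw a) (monw (compl_rexp b)) = 0.
Proof.
move=> lt_ab ab_mod a_gt0; rewrite dotw_monw_compl // (bigD1 i) //= sum_expf.
have b_le : (b i <= q1)%N by rewrite -ltnS.
case: posnP => [_|e_gt0]; first by rewrite mul0r oppr0.
have /negbTE-> : ~~ (q1 %| a i + (q1 - b i))%N.
  apply: contraTN lt_ab => /(dvdn_leq e_gt0) le_q1.
  by rewrite -leqNgt -(leq_add2r (q1 - b i)) subnKC.
by rewrite mul0r oppr0.
Qed.

Lemma dotw_monw_compl_self_neq0 (b : rexp) :
  (0 < sdeg b)%N -> dotw (monw b) (monw (compl_rexp b)) != 0.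
Proof.
move=> b_gt0; rewrite dotw_monw_compl // (eq_bigr (fun _ => -1)).
  by rewrite prodr_const oppr_eq0 expf_eq0 oppr_eq0 oner_eq0 andbF.
by move=> i _; rewrite sum_expf subnKC ?dvdnn ?card_pred_gt0 // -ltnS.
Qed.

Lemma dotw_sum_monw (d : rexp -> F) c :
  dotw [ffun P => \sum_a d a * monw a P] c = \sum_a d a * dotw (monw a) c.
Proof.
rewrite /dotw (eq_bigr (fun P => \sum_a d a * (monw a P * c P))); last first.
  by move=> P _; rewrite ffunE mulr_suml; apply: eq_bigr => a _; rewrite mulrA.
by rewrite exchange_big; apply: eq_bigr => a _; rewrite mulr_sumr.
Qed.

Lemma sdeg_lt (a b : rexp) : (forall i, b i <= a i)%N -> a != b -> (sdeg b < sdeg a)%N.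
Proof.
move=> le_ba ne_ab; have [i ne_i] : exists i, a i != b i.
  apply/existsP; apply: contraNT ne_ab; rewrite negb_exists => /forallP eq_ab.
  by apply/eqP/ffunP => j; apply/eqP/negPn/eq_ab.
rewrite /sdeg (bigD1 i) //= [X in (_ < X)%N](bigD1 i) //= -addSn leq_add ?leq_sum //.
by rewrite ltn_neqAle le_ba andbT eq_sym.
Qed.

(* Triangularity: a coefficient of maximal degree above k would pair nontrivially with the
   complementary monomial and with nothing else. *)
Lemma orthogonal_compl_coef_eq0 k (d : rexp -> F) : (k %% q1 != 0)%N ->
  (forall a, d a != 0 -> (sdeg a = k %[mod q1])%N) ->
  (forall b, d b != 0 -> (k < sdeg b)%N ->
     dotw [ffun P => \sum_a d a * monw a P] (monw (compl_rexp b)) = 0) ->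
  forall a, (k < sdeg a)%N -> d a = 0.
Proof.
move=> k_mod d_mod orth a0 k_lt_a0; apply/eqP; apply: contraT => d_a0.
have d_pos a : d a != 0 -> (0 < sdeg a)%N by move/d_mod/gt0_of_modn_neq0; apply.
have high_a0 : (k < sdeg a0)%N && (d a0 != 0) by rewrite k_lt_a0.
have [b /andP[k_lt_b d_b] b_max] :=
  @arg_maxnP _ a0 (fun a => (k < sdeg a)%N && (d a != 0)) sdeg high_a0.
suff : dotw [ffun P => \sum_a d a * monw a P] (monw (compl_rexp b)) != 0.
  by rewrite orth ?eqxx.
rewrite dotw_sum_monw (bigD1 b) //= big1 ?addr0.
  by rewrite mulf_neq0 // dotw_monw_compl_self_neq0 ?d_pos.
move=> a ne_ab; have [->|d_a] := eqVneq (d a) 0; first by rewrite mul0r.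
have [/existsP[i lt_ab]|] := boolP [exists i, (a i < b i)%N].
  by rewrite (dotw_monw_compl_eq0 lt_ab) ?mulr0 ?d_pos // (d_mod _ d_a) (d_mod _ d_b).
rewrite negb_exists => /forallP not_lt_ab.
have le_ba i : (b i <= a i)%N by rewrite leqNgt not_lt_ab.
have lt_ba := sdeg_lt le_ba ne_ab.
have := b_max a; rewrite (ltn_trans k_lt_b lt_ba) d_a => /(_ isT) /=.
by rewrite leqNgt lt_ba.
Qed.

(* Unlike [e %% q1], this keeps [t ^+ e] unchanged also at [t = 0]. *)
Definition reduce_exp (e : nat) : 'I_q1.+1 :=
  inord (if e is 0 then 0 else (e.-1 %% q1).+1)%N.

Lemma reduce_expE e : (reduce_exp e : nat) = (if e is 0 then 0 else (e.-1 %% q1).+1)%N.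
Proof. by rewrite inordK //; case: e => //= e; rewrite ltnS ltn_mod card_pred_gt0. Qed.

Lemma expf_reduce_exp (t : F) e : t ^+ e = t ^+ reduce_exp e.
Proof.
rewrite reduce_expE; case: e => //= e.
have [->|t0] := eqVneq t 0; first by rewrite !expr0n.
by rewrite !exprS (expf_modn_pred_card e t0).
Qed.

Lemma reduce_exp_mod e : (reduce_exp e = e %[mod q1])%N.
Proof. by rewrite reduce_expE; case: e => //= e; rewrite -addn1 -[e.+1]addn1 modnDml. Qed.

Definition rexp_of_mnm (m : 'X_{1..n.+1}) : rexp := [ffun i => reduce_exp (m i)].

Lemma sdeg_rexp_of_mnm m : (sdeg (rexp_of_mnm m) = mdeg m %[mod q1])%N.
Proof.
rewrite /sdeg mdegE -modn_summ -[RHS]modn_summ; congr (_ %% _)%N.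
by apply: eq_bigr => i _; rewrite ffunE reduce_exp_mod.
Qed.

Lemma eval_homog_decomp K (p : {mpoly F[n.+1]}) : p \is K.-homog ->
  exists d : rexp -> F, (forall a, d a != 0 -> (sdeg a = K %[mod q1])%N) /\
    forall P : PP, p.@[fun i => val P i] = \sum_a d a * monw a P.
Proof.
move=> p_homog.
exists (fun a => \sum_(m <- msupp p | rexp_of_mnm m == a) p@_m); split.
  move=> a; have [/hasP[m m_supp /eqP <-] _|no_m] :=
    boolP (has (fun m => rexp_of_mnm m == a) (msupp p)).
    by rewrite sdeg_rexp_of_mnm (dhomogP _ _ _ p_homog m m_supp).
  rewrite big_seq_cond big1 ?eqxx // => m /andP[m_supp /eqP ma].
  by move/hasPn: no_m => /(_ m m_supp); rewrite ma eqxx.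
move=> P; rewrite mevalE (eq_bigr (fun m => \sum_(a | rexp_of_mnm m == a) p@_m * monw a P)).
  by rewrite (exchange_big_dep xpredT) //=; apply: eq_bigr => a _; rewrite mulr_suml.
move=> m _; rewrite (big_pred1 (rexp_of_mnm m)) => [|a]; last by rewrite /= eq_sym.
rewrite ffunE /mon; congr (_ * _); apply: eq_bigr => i _.
by rewrite ffunE -expf_reduce_exp.
Qed.

Lemma projRM_sum k (J : finType) (c : J -> F) (w : J -> word F n) :
  (forall j, c j != 0 -> projRM k (w j)) -> projRM k [ffun P => \sum_j c j * w j P].
Proof.
move=> w_in.
have p_ex j : exists p : {mpoly F[n.+1]}, p \is k.-homog /\
    (c j != 0 -> forall P : PP, w j P = p.@[fun i => val P i]).
  have [cj0|/w_in[p [p_homog p_eval]]] := eqVneq (c j) 0; last by exists p.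
  by exists 0; split; rewrite ?rpred0 ?cj0 ?eqxx.
have [p p_spec] := fin_all_exists p_ex.
exists (\sum_j c j *: p j); split.
  by apply: rpred_sum => j _; apply/rpredZ; case: (p_spec j).
move=> P; rewrite ffunE raddf_sum /=; apply: eq_bigr => j _.
rewrite mevalZ; have [->|cj0] := eqVneq (c j) 0; first by rewrite !mul0r.
by case: (p_spec j) => _ /(_ cj0 P) ->.
Qed.

(* Pad [x^a] with a power [x_i^(k - |a|)] of a variable occurring in it, which is harmless
   since [q - 1] divides [k - |a|]. *)
Lemma monw_projRM k (a : rexp) : (0 < sdeg a <= k)%N -> (sdeg a = k %[mod q1])%N ->
  projRM k (monw a).
Proof.
move=> /andP[a_gt0 a_le_k] ak_mod.
have [i0 a_i0] : exists i0, (0 < a i0)%N.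
  move: a_gt0; rewrite lt0n sum_nat_eq0 negb_forall => /existsP[i /= ai].
  by exists i; rewrite lt0n.
pose c := (k - sdeg a)%N.
have q1_dvd_c : (q1 %| c)%N by rewrite -eqn_mod_dvd // ak_mod.
pose m := [multinom (a j + (if j == i0 then c else 0))%N | j < n.+1].
exists 'X_[m]; split.
  rewrite dhomogX; apply/eqP; rewrite /= mdegE.
  rewrite (eq_bigr (fun j => a j + (if j == i0 then c else 0))%N) => [|j _]; last first.
    by rewrite mnmE.
  by rewrite big_split /= -big_mkcond big_pred1_eq subnKC.
move=> P; rewrite mevalX ffunE /mon; apply: eq_bigr => j _; rewrite mnmE.
have [->|_] := eqVneq j i0; last by rewrite addn0.
have [->|P0] := eqVneq (val P i0) 0; first by rewrite !expr0n addn_eq0 !eqn0Ngt a_i0.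
by rewrite exprD (expf_modn_pred_card c P0) (eqP q1_dvd_c) expr0 mulr1.
Qed.

(* At a point with [x_i != 0], the factor [x_i^(q-1) - (x_j - P_j x_i)^(q-1)] is the
   indicator of [x_j = P_j x_i]. *)
Lemma indicator_projRM k (P : PP) : (0 < k)%N ->
  projRM (k + n.+1 * q1) [ffun Q : PP => ((Q == P)%:R : F)].
Proof.
move=> k_gt0; have [i /andP[/eqP Pi _]] := ppoint_lead P.
pose g j : {mpoly F[n.+1]} := 'X_i ^+ q1 - ('X_j - val P j *: 'X_i) ^+ q1.
exists ('X_i ^+ k * \prod_j g j); split.
  apply/dhomogM/dhomog_prod_ord => [|j]; first exact: dhomogXn.
  rewrite rpredB ?dhomogXn // -{2}[q1]mul1n; apply: dhomogMn.
  by rewrite rpredB ?rpredZ ?dhomogX1.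
move=> Q; rewrite ffunE rmorphM rmorphXn rmorph_prod /= mevalXU.
under eq_bigr => j _ do rewrite /g rmorphB !rmorphXn rmorphB /= mevalZ !mevalXU.
have [Qi0|Qi] := eqVneq (val Q i) 0.
  rewrite Qi0 expr0n gtn_eqF // mul0r; case: eqP => // QP.
  by move: Qi0; rewrite QP Pi => /eqP; rewrite oner_eq0.
rewrite expf_pred_card //.
have [/forallP QP|] := boolP [forall j, val Q j == val P j * val Q i].
  have -> : Q = P.
    apply: (@scalev_ppoint_inj (val Q i)); apply/ffunP => j.
    by rewrite ffunE (eqP (QP j)) mulrC.
  rewrite Pi expr1n mul1r eqxx big1 // => j _.
  by rewrite mulr1 subrr expr0n gtn_eqF ?card_pred_gt0 // subr0.
rewrite negb_forall => /existsP[j Qj].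
have /negbTE-> : Q != P by apply: contraNneq Qj => ->; rewrite Pi mulr1.
by rewrite (bigD1 j) //= expf_pred_card ?subrr ?mul0r ?mulr0 // subr_eq0.
Qed.

Lemma projRM_all k (w : word F n) : (0 < k)%N -> projRM (k + n.+1 * q1) w.
Proof.
move=> k_gt0.
suff -> : w = [ffun Q => \sum_P w P * [ffun Q : PP => ((Q == P)%:R : F)] Q].
  by apply: projRM_sum => P _; apply: indicator_projRM.
apply/ffunP => Q; rewrite ffunE (bigD1 Q) //= ffunE eqxx mulr1 big1 ?addr0 // => P PQ.
by rewrite ffunE eq_sym (negbTE PQ) mulr0.
Qed.

Lemma dual_projRM_sub k :
  (n * q1 <= 2 * k)%N -> ((2 * k) %% q1 = 0)%N -> (k %% q1 != 0)%N ->
  forall w, dual_code (@projRM F n k) w -> projRM k w.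
Proof.
move=> le_nq1 dvd_2k ndvd_k w w_dual.
have k_gt0 : (0 < k)%N := gt0_of_modn_neq0 (erefl (k %% q1)%N) ndvd_k.
have [p [p_homog w_eval]] := projRM_all w k_gt0.
have [d [d_modK p_eval]] := eval_homog_decomp p_homog.
have d_mod a : d a != 0 -> (sdeg a = k %[mod q1])%N.
  by move/d_modK->; rewrite addnC modnMDl.
have wE : w = [ffun P => \sum_a d a * monw a P].
  by apply/ffunP => P; rewrite ffunE w_eval p_eval.
have d_high a : (k < sdeg a)%N -> d a = 0.
  apply: (orthogonal_compl_coef_eq0 ndvd_k d_mod) => // b d_b k_lt_b.
  have [t_bounds t_mod] :=
    compl_degree_le le_nq1 dvd_2k ndvd_k (d_mod b d_b) k_lt_b (sdeg_compl_rexp b).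
  by rewrite -wE; apply: w_dual; apply: monw_projRM.
rewrite wE; apply: projRM_sum => a d_a; apply: monw_projRM (d_mod a d_a).
rewrite (gt0_of_modn_neq0 (d_mod a d_a) ndvd_k) leqNgt.
by apply: contra d_a => /d_high/eqP.
Qed.

End ProjectiveReedMuller.

Theorem mainTheorem6 (F : finFieldType) (n k : nat) :
  (1 <= n)%N ->
  (n * (#|F| - 1) <= 2 * k)%N ->
  (k <= n * (#|F| - 1))%N ->
  ((2 * k) %% (#|F| - 1) = 0)%N ->
  (k %% (#|F| - 1) != 0)%N ->
  self_orthogonal (dual_code (@projRM F n k)).
Proof.
rewrite !subn1 => _ le_nq1 _ dvd_2k ndvd_k u v u_dual v_dual.
exact/u_dual/(dual_projRM_sub le_nq1 dvd_2k ndvd_k).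
Qed.
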